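(* Let $(\rho_0,p_0)$ solve the TOV system on $[0,R)$ with regular centre, mass function $m_0$, $g_0=\frac{m_0+4\pi p_0r^3}{r^2[1-2m_0/r]}$, $I_0(r)=\int_0^rg_0$. For real parameters $\Delta p$ and $\delta\rho_c$ define $$\delta p_1(r)=\frac{\Delta p\sqrt{1-2m_0/r}\,e^{-2I_0(r)}}{1+4\pi\Delta p\int_0^r\frac{s\,e^{-2I_0(s)}}{\sqrt{1-2m_0(s)/s}}ds},\qquad g_1(r)=g_0(r)+\frac{4\pi\,\delta p_1(r)\,r}{1-2m_0(r)/r},$$ $$\delta m(r)=\frac{4\pi r^3\,\delta\rho_c}{3[1+rg_1]^2}\exp\Bigl\{2\int_0^rg_1\frac{1-sg_1}{1+sg_1}ds\Bigr\},\qquad \delta p(r)=\delta p_1(r)-\frac{\delta m(r)}{4\pi r^3}\,\frac{1+8\pi[p_0+\delta p_1]r^2}{1-2m_0/r}.$$ Then, on any interval $[0,R')$ on which all denominators are positive and $1-2(m_0+\delta m)/r>0$, the pair $(\rho,p)$ with $m=m_0+\delta m$, $\rho=m'/(4\pi r^2)$, $p=p_0+\delta p$ solves the TOV system with regular centre, with central density $\rho_0(0)+\delta\rho_c$ and central pressure $p_0(0)+\delta p_c$, where $\delta p_c=\Delta p-\delta\rho_c/3$; the two parameters $\Delta p,\delta\rho_c$ are independent. *)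

From Stdlib Require Import Reals Lra.
From Coquelicot Require Import Coquelicot.
Open Scope R_scope.

Definition mass (rho : R -> R) (r : R) : R :=
  RInt (fun s => 4 * PI * s ^ 2 * rho s) 0 r.

Definition gTOV (m p : R -> R) (r : R) : R :=
  (m r + 4 * PI * p r * r ^ 3) / (r ^ 2 * (1 - 2 * m r / r)).

(* (rho, p) solves the TOV system on [0, R0) with regular centre:
   rho and p are continuous on [0, R0) (right-continuous at the centre,
   so that rho 0 and p 0 are the central density and pressure),
   m = mass rho satisfies 1 - 2 m / r > 0 on (0, R0) and
   p' = -(rho + p) g  on (0, R0). *)
Definition TOV_regular (rho p : R -> R) (R0 : R) : Prop :=
  0 < R0 /\
  filterlim rho (at_right 0) (locally (rho 0)) /\
  filterlim p (at_right 0) (locally (p 0)) /\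
  (forall r, 0 < r < R0 -> continuous rho r /\ continuous p r) /\
  (forall r, 0 < r < R0 -> 0 < 1 - 2 * mass rho r / r) /\
  (forall r, 0 < r < R0 ->
     is_derive p r (- (rho r + p r) * gTOV (mass rho) p r)).

Section Pert.
Variables (rho0 p0 : R -> R) (Dp drhoc : R).

Definition m0 := mass rho0.
Definition g0 := gTOV m0 p0.
Definition I0 (r : R) : R := RInt g0 0 r.

Definition dp1 (r : R) : R :=
  Dp * sqrt (1 - 2 * m0 r / r) * exp (- 2 * I0 r) /
  (1 + 4 * PI * Dp *
     RInt (fun s => s * exp (- 2 * I0 s) / sqrt (1 - 2 * m0 s / s)) 0 r).

Definition g1 (r : R) : R :=
  g0 r + 4 * PI * dp1 r * r / (1 - 2 * m0 r / r).

Definition dm (r : R) : R :=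
  4 * PI * r ^ 3 * drhoc / (3 * (1 + r * g1 r) ^ 2) *
  exp (2 * RInt (fun s => g1 s * (1 - s * g1 s) / (1 + s * g1 s)) 0 r).

Definition dp (r : R) : R :=
  dp1 r - dm r / (4 * PI * r ^ 3) *
          ((1 + 8 * PI * (p0 r + dp1 r) * r ^ 2) / (1 - 2 * m0 r / r)).
End Pert.

From Stdlib Require Import Reals Lra.
From Coquelicot Require Import Coquelicot.
Open Scope R_scope.

(* The pressure p0 + dp1 solves the TOV equation with the unperturbed mass m0:
   inserting it gives a Bernoulli equation for dp1, linearised by 1/dp1, whose
   solution is the stated formula, and its gravity is g1.  Adding the mass dm
   forces the correction term of dp, and p0 + dp solves the TOV equation for
   the mass m0 + dm exactly when dm solves a linear first-order equation with
   coefficients built from g1; dm is its solution, which is checked by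
   differentiation.  Near the centre r g1 -> 0, so dm ~ (4/3) pi r^3 drhoc and
   dp -> Dp - drhoc / 3.  Finally m0 + dm is the mass of rho = (m0 + dm)' / (4 pi r^2)
   because both vanish at the centre. *)

Section Limits.
Context {F : (R -> Prop) -> Prop} {FF : Filter F}.

Lemma lim_eq_value (f : R -> R) (l l' : R) :
  filterlim f F (locally l) -> l = l' -> filterlim f F (locally l').
Proof. intros Hf <-; exact Hf. Qed.

Lemma lim_plus (f g : R -> R) (a b : R) :
  filterlim f F (locally a) -> filterlim g F (locally b) ->
  filterlim (fun x => f x + g x) F (locally (a + b)).
Proof.
intros Hf Hg; apply (filterlim_comp_2 f g Rplus Hf Hg).
apply (@filterlim_plus R_AbsRing R_NormedModule).
Qed.

Lemma lim_mult (f g : R -> R) (a b : R) :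
  filterlim f F (locally a) -> filterlim g F (locally b) ->
  filterlim (fun x => f x * g x) F (locally (a * b)).
Proof.
intros Hf Hg; apply (filterlim_comp_2 f g Rmult Hf Hg).
apply (@filterlim_mult R_AbsRing).
Qed.

Lemma lim_comp_continuous (f h : R -> R) (a : R) :
  filterlim f F (locally a) -> continuous h a ->
  filterlim (fun x => h (f x)) F (locally (h a)).
Proof. intros Hf Hh; exact (filterlim_comp _ _ _ f h _ _ _ Hf Hh). Qed.

Lemma lim_opp (f : R -> R) (a : R) :
  filterlim f F (locally a) -> filterlim (fun x => - f x) F (locally (- a)).
Proof.
intros Hf; apply (lim_comp_continuous f Ropp a Hf).
apply (continuous_opp (fun x : R => x)), continuous_id.
Qed.

Lemma lim_minus (f g : R -> R) (a b : R) :
  filterlim f F (locally a) -> filterlim g F (locally b) ->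
  filterlim (fun x => f x - g x) F (locally (a - b)).
Proof. intros Hf Hg; apply (lim_plus f (fun x => - g x)); [exact Hf | now apply lim_opp]. Qed.

Lemma lim_inv (f : R -> R) (a : R) :
  filterlim f F (locally a) -> a <> 0 ->
  filterlim (fun x => / f x) F (locally (/ a)).
Proof. intros Hf Ha; apply (lim_comp_continuous f Rinv a Hf); now apply continuous_Rinv. Qed.

Lemma lim_div (f g : R -> R) (a b : R) :
  filterlim f F (locally a) -> filterlim g F (locally b) -> b <> 0 ->
  filterlim (fun x => f x / g x) F (locally (a / b)).
Proof. intros Hf Hg Hb; apply (lim_mult f (fun x => / g x)); [exact Hf | now apply lim_inv]. Qed.

Lemma lim_exp (f : R -> R) (a : R) :
  filterlim f F (locally a) -> filterlim (fun x => exp (f x)) F (locally (exp a)).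
Proof. intros Hf; apply (lim_comp_continuous f exp a Hf), continuous_exp. Qed.

Lemma lim_sqrt (f : R -> R) (a : R) :
  filterlim f F (locally a) -> filterlim (fun x => sqrt (f x)) F (locally (sqrt a)).
Proof. intros Hf; apply (lim_comp_continuous f sqrt a Hf), continuous_sqrt. Qed.

Lemma lim_pow (f : R -> R) (a : R) (n : nat) :
  filterlim f F (locally a) -> filterlim (fun x => f x ^ n) F (locally (a ^ n)).
Proof.
intros Hf; induction n as [|n IH]; simpl.
- apply filterlim_const.
- now apply lim_mult.
Qed.

End Limits.

Lemma filterlim_id_at_right_0 : filterlim (fun x => x) (at_right 0) (locally 0).
Proof. intros P [e He]; exists e; intros y Hy _; now apply He. Qed.

Ltac solve_lim :=
  match goal with
  | H : filterlim ?f ?F (locally _) |- filterlim ?f ?F (locally _) => exact H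
  | |- filterlim (fun x => x) (at_right 0) _ => exact filterlim_id_at_right_0
  | |- filterlim (fun x => x) (locally _) _ => apply filterlim_id
  | |- filterlim (fun x => ?c) _ (locally _) => apply filterlim_const
  | |- filterlim (fun x => @?A x + @?B x) _ _ => eapply (lim_plus A B); [solve_lim|solve_lim]
  | |- filterlim (fun x => @?A x - @?B x) _ _ => eapply (lim_minus A B); [solve_lim|solve_lim]
  | |- filterlim (fun x => @?A x * @?B x) _ _ => eapply (lim_mult A B); [solve_lim|solve_lim]
  | |- filterlim (fun x => @?A x / @?B x) _ _ => eapply (lim_div A B); [solve_lim|solve_lim|]
  | |- filterlim (fun x => - @?A x) _ _ => eapply (lim_opp A); solve_lim
  | |- filterlim (fun x => / @?A x) _ _ => eapply (lim_inv A); [solve_lim|]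
  | |- filterlim (fun x => exp (@?A x)) _ _ => eapply (lim_exp A); solve_lim
  | |- filterlim (fun x => sqrt (@?A x)) _ _ => eapply (lim_sqrt A); solve_lim
  | |- filterlim (fun x => (@?A x) ^ ?n) _ _ => eapply (lim_pow A _ n); solve_lim
  end.

Ltac compute_lim :=
  eapply lim_eq_value; [solve_lim|];
  rewrite ?Rminus_0_r, ?Rmult_0_r, ?Rplus_0_r, ?exp_0, ?sqrt_1;
  try solve [lra]; try solve [field; repeat split; lra]; try solve [ring].

Lemma at_right_0_interval (d : R) (P : R -> Prop) :
  0 < d -> (forall x, 0 < x < d -> P x) -> at_right 0 P.
Proof.
intros Hd HP; exists (mkposreal d Hd); intros y Hy Hy0; apply HP.
change (Rabs (y - 0) < d) in Hy; apply Rabs_def2 in Hy; lra.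
Qed.

Lemma lim_at_right_0_of_linear_bound (f : R -> R) (d C : R) :
  0 < d -> (forall x, 0 < x < d -> Rabs (f x) <= C * x) ->
  filterlim f (at_right 0) (locally 0).
Proof.
intros Hd Hb; apply filterlim_locally; intros [eps Heps]; simpl.
assert (HC : 0 < Rabs C + 1) by (generalize (Rabs_pos C); lra).
assert (He : 0 < Rmin d (eps / (Rabs C + 1))).
{ apply Rmin_pos; [exact Hd | now apply Rdiv_lt_0_compat]. }
apply (at_right_0_interval _ _ He); intros x Hx.
generalize (Rmin_l d (eps / (Rabs C + 1))) (Rmin_r d (eps / (Rabs C + 1))); intros Hd' He'.
change (Rabs (f x - 0) < eps); rewrite Rminus_0_r.
apply Rle_lt_trans with (C * x); [apply Hb; lra|].
assert (Hx' : x * (Rabs C + 1) < eps).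
{ replace eps with (eps / (Rabs C + 1) * (Rabs C + 1)) by (field; lra).
  apply Rmult_lt_compat_r; lra. }
generalize (Rle_abs C) (Rabs_pos C); nra.
Qed.

Lemma bounded_at_right_0_of_lim (f : R -> R) (l : R) :
  filterlim f (at_right 0) (locally l) ->
  exists d B, 0 < d /\ forall x, 0 < x < d -> Rabs (f x) <= B.
Proof.
intros Hf; destruct (proj1 (filterlim_locally _ _) Hf (mkposreal 1 Rlt_0_1)) as [[d Hd] Hball].
exists d, (Rabs l + 1); split; [exact Hd|]; intros x Hx.
assert (Hfx : Rabs (f x - l) < 1).
{ apply Hball; [|lra]. change (Rabs (x - 0) < d); rewrite Rminus_0_r, Rabs_pos_eq; lra. }
generalize (Rabs_triang_inv (f x) l); lra.
Qed.

Lemma is_derive_eq_value (f : R -> R) (x l l' : R) :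
  is_derive f x l -> l = l' -> is_derive f x l'.
Proof. intros H <-; exact H. Qed.

Lemma continuous_of_is_derive (f : R -> R) (x l : R) : is_derive f x l -> continuous f x.
Proof. intros H; apply (@ex_derive_continuous R_AbsRing R_NormedModule); now exists l. Qed.

Lemma is_derive_RInt_of_continuous_below (G : R -> R) (b x : R) :
  0 < b -> (forall y, y < b -> continuous G y) -> x < b ->
  is_derive (fun y => RInt G 0 y) x (G x).
Proof.
intros Hb HG Hx; apply (is_derive_RInt G _ 0); [|apply HG, Hx].
apply (locally_interval _ x (x - 1) b); simpl; try lra; intros y _ Hy.
apply (@RInt_correct R_CompleteNormedModule), (@ex_RInt_continuous R_CompleteNormedModule).
intros z Hz; apply HG; generalize (Rmax_lub_lt 0 y b Hb Hy); lra.
Qed.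

Section IntegralFromCentre.
Variables (f : R -> R) (l b : R).
Hypothesis b_pos : 0 < b.
Hypothesis f_at_centre : filterlim f (at_right 0) (locally l).
Hypothesis f_continuous : forall x, 0 < x < b -> continuous f x.

Lemma RInt_from_0_of_extension (G : R -> R) :
  (forall x, 0 < x -> G x = f x) -> forall y, 0 <= y -> RInt f 0 y = RInt G 0 y.
Proof.
intros HG y Hy; apply RInt_ext; intros x Hx.
rewrite Rmin_left, Rmax_right in Hx by lra.
symmetry; apply HG; lra.
Qed.

Lemma ex_RInt_from_0 (x : R) : 0 < x < b -> ex_RInt f 0 x.
Proof.
intros Hx.
destruct (C0_extension_left f l 0 b b_pos f_continuous f_at_centre) as [G [HGc [HGf _]]].
apply ex_RInt_ext with G.
- intros y Hy; rewrite Rmin_left, Rmax_right in Hy by lra; apply HGf; lra.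
- apply (@ex_RInt_continuous R_CompleteNormedModule); intros y Hy; apply HGc.
  rewrite Rmax_right in Hy by lra; lra.
Qed.

Lemma is_derive_RInt_from_0 (x : R) :
  0 < x < b -> is_derive (fun y => RInt f 0 y) x (f x).
Proof.
intros Hx.
destruct (C0_extension_left f l 0 b b_pos f_continuous f_at_centre) as [G [HGc [HGf _]]].
rewrite <- (HGf x) by lra.
apply is_derive_ext_loc with (fun y => RInt G 0 y).
- apply (locally_interval _ x 0 b); simpl; try lra; intros y Hy _.
  symmetry; apply RInt_from_0_of_extension; [exact HGf | lra].
- apply (is_derive_RInt_of_continuous_below G b); lra || exact HGc.
Qed.

Lemma RInt_from_0_at_centre : filterlim (fun y => RInt f 0 y) (at_right 0) (locally 0).
Proof.
destruct (C0_extension_left f l 0 b b_pos f_continuous f_at_centre) as [G [HGc [HGf _]]].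
assert (HIG : continuous (fun y => RInt G 0 y) 0).
{ apply (continuous_of_is_derive _ _ (G 0)).
  apply (is_derive_RInt_of_continuous_below G b); lra || exact HGc. }
unfold continuous in HIG; rewrite RInt_point in HIG.
apply filterlim_ext_loc with (fun y => RInt G 0 y).
- apply (at_right_0_interval b); [exact b_pos|]; intros y Hy.
  symmetry; apply RInt_from_0_of_extension; [exact HGf | lra].
- eapply filterlim_filter_le_1; [apply filter_le_within | exact HIG].
Qed.

End IntegralFromCentre.

Lemma const_of_zero_derivative (h : R -> R) (a b : R) :
  (forall y, a < y < b -> is_derive h y 0) ->
  forall x y, a < y < x -> x < b -> h x = h y.
Proof.
intros Hh x y Hyx Hxb.
destruct (MVT_gen h y x (fun _ => 0)) as [c [_ Hc]].
- intros z Hz; rewrite Rmin_left, Rmax_right in Hz by lra; apply Hh; lra.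
- intros z Hz; rewrite Rmin_left, Rmax_right in Hz by lra.
  apply continuity_pt_filterlim, (@ex_derive_continuous R_AbsRing R_NormedModule).
  exists 0; apply Hh; lra.
- lra.
Qed.

Section Mass.
Variables (rho : R -> R) (l b : R).
Hypothesis b_pos : 0 < b.
Hypothesis rho_at_centre : filterlim rho (at_right 0) (locally l).
Hypothesis rho_continuous : forall x, 0 < x < b -> continuous rho x.

Let mass_density_at_centre :
  filterlim (fun s => 4 * PI * s ^ 2 * rho s) (at_right 0) (locally 0).
Proof. compute_lim. Qed.

Let mass_density_continuous (x : R) :
  0 < x < b -> continuous (fun s => 4 * PI * s ^ 2 * rho s) x.
Proof. intros Hx; generalize (rho_continuous x Hx); unfold continuous; intros; compute_lim. Qed.

Lemma is_derive_mass (x : R) : 0 < x < b -> is_derive (mass rho) x (4 * PI * x ^ 2 * rho x).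
Proof.
exact (is_derive_RInt_from_0 _ _ _ b_pos mass_density_at_centre mass_density_continuous x).
Qed.

Lemma mass_at_centre : filterlim (mass rho) (at_right 0) (locally 0).
Proof.
exact (RInt_from_0_at_centre _ _ _ b_pos mass_density_at_centre mass_density_continuous).
Qed.

(* The density is bounded near the centre, so |m(x)| <= 4 pi B x^3. *)
Lemma mass_div_sq_at_centre :
  filterlim (fun x => mass rho x / x ^ 2) (at_right 0) (locally 0).
Proof.
destruct (bounded_at_right_0_of_lim _ _ rho_at_centre) as [d [B [Hd HB]]].
assert (HPI := PI_RGT_0).
apply (lim_at_right_0_of_linear_bound _ (Rmin d b) (4 * PI * B)); [now apply Rmin_pos|].
intros x Hx; generalize (Rmin_l d b) (Rmin_r d b); intros Hd' Hb'.
assert (Hm : Rabs (mass rho x) <= (x - 0) * (4 * PI * x ^ 2 * B)).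
{ apply abs_RInt_le_const; [lra | |].
  { apply (ex_RInt_from_0 _ _ _ b_pos mass_density_at_centre mass_density_continuous); lra. }
  intros t Ht.
  rewrite !Rabs_mult, (Rabs_pos_eq 4), (Rabs_pos_eq PI), (Rabs_pos_eq (t ^ 2))
    by (try apply pow2_ge_0; lra).
  assert (HB0 : 0 <= B)
    by (apply Rle_trans with (Rabs (rho (x / 2))); [apply Rabs_pos | apply HB; lra]).
  assert (Ht2 : t ^ 2 <= x ^ 2) by (simpl; nra).
  destruct (Req_dec t 0) as [-> | Ht0].
  - replace (0 ^ 2) with 0 by ring; rewrite Rmult_0_r, Rmult_0_l.
    apply Rmult_le_pos; [apply Rmult_le_pos; [lra | apply pow2_ge_0] | exact HB0].
  - apply Rmult_le_compat; try nra; [apply Rabs_pos | apply HB; lra]. }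
assert (Hx2 : 0 < x ^ 2) by (apply pow_lt; lra).
unfold Rdiv; rewrite Rabs_mult, Rabs_inv, (Rabs_pos_eq (x ^ 2)) by lra.
apply Rmult_le_reg_r with (x ^ 2); [exact Hx2|].
rewrite Rmult_assoc, Rinv_l, Rmult_1_r by lra.
replace (4 * PI * B * x * x ^ 2) with ((x - 0) * (4 * PI * x ^ 2 * B)) by ring.
exact Hm.
Qed.

Lemma mass_unique (F : R -> R) :
  (forall x, 0 < x < b -> is_derive F x (4 * PI * x ^ 2 * rho x)) ->
  filterlim F (at_right 0) (locally 0) ->
  forall x, 0 < x < b -> mass rho x = F x.
Proof.
intros HF HF0 x Hx.
set (h := fun y => mass rho y - F y).
assert (Hh : forall y, 0 < y < b -> is_derive h y 0).
{ intros y Hy; eapply (is_derive_ext h).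
  - reflexivity.
  - replace 0 with (4 * PI * y ^ 2 * rho y - 4 * PI * y ^ 2 * rho y) by ring.
    apply (@is_derive_minus R_AbsRing R_NormedModule);
      [apply is_derive_mass | apply HF]; exact Hy. }
assert (Hlim0 : filterlim h (at_right 0) (locally 0)).
{ unfold h; generalize mass_at_centre; intros; compute_lim. }
assert (Hlimx : filterlim h (at_right 0) (locally (h x))).
{ apply filterlim_ext_loc with (fun _ => h x); [|apply filterlim_const].
  apply (at_right_0_interval x); [lra|]; intros y Hy.
  apply (const_of_zero_derivative h 0 b Hh); lra. }
assert (Hhx : h x = 0) by exact (filterlim_locally_unique (F := at_right 0) h _ _ Hlimx Hlim0).
unfold h in Hhx; lra.
Qed.

End Mass.

Lemma sub_2mass_pos (r m : R) : 0 < r -> 0 < 1 - 2 * m / r -> 0 < r - 2 * m.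
Proof.
intros Hr Hu; replace (r - 2 * m) with (r * (1 - 2 * m / r)) by (field; lra).
now apply Rmult_lt_0_compat.
Qed.

Lemma sub_2mass_neq0 (r m : R) : r <> 0 -> 1 - 2 * m / r <> 0 -> r - 2 * m <> 0.
Proof.
intros Hr Hu H; apply Hu.
replace (1 - 2 * m / r) with ((r - 2 * m) / r) by (field; exact Hr).
rewrite H; unfold Rdiv; ring.
Qed.

Ltac derive_side := repeat match goal with
  | |- _ /\ _ => split
  | |- _ * _ <> 0 => apply Rmult_integral_contrapositive_currified
  | |- ex_derive _ _ => eexists; eassumption
  | |- True => exact I
  end; try assumption; try lra.

Ltac rewrite_Derive f l := replace (Derive (fun x => f x) _) with l
  by (symmetry; now apply is_derive_unique).

Lemma is_derive_dp1_shape (M I K : R -> R) (Mr' Ir' Dp r : R) :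
  r <> 0 -> 0 < 1 - 2*M r/r -> 1 + 4*PI*Dp*K r <> 0 ->
  is_derive M r Mr' -> is_derive I r Ir' ->
  is_derive K r (r*exp(-2*I r)/sqrt(1-2*M r/r)) ->
  is_derive (fun s => Dp*sqrt(1-2*M s/s)*exp(-2*I s)/(1+4*PI*Dp*K s)) r
    (Dp*sqrt(1-2*M r/r)*exp(-2*I r)/(1+4*PI*Dp*K r) *
      ((-2*Mr'/r + 2*M r/r^2)/(2*(1-2*M r/r)) - 2*Ir'
       - 4*PI*(Dp*sqrt(1-2*M r/r)*exp(-2*I r)/(1+4*PI*Dp*K r))*r/(1-2*M r/r))).
Proof.
intros Hr Hu Hd HM HI HK.
auto_derive; try solve [derive_side].
rewrite_Derive M Mr'; rewrite_Derive I Ir'; rewrite_Derive K (r*exp(-2*I r)/sqrt(1-2*M r/r)).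
change (1 + - (2 * M r * / r)) with (1 - 2 * M r / r).
assert (HS : sqrt (1 - 2 * M r / r) * sqrt (1 - 2 * M r / r) = 1 - 2 * M r / r)
  by (apply sqrt_sqrt; lra).
assert (HS0 : 0 < sqrt (1 - 2 * M r / r)) by (apply sqrt_lt_R0; lra).
set (S := sqrt (1 - 2 * M r / r)) in *.
rewrite <- HS; field; repeat split; lra.
Qed.

Lemma is_derive_g1_shape (M P Q : R -> R) (Mr' Pr' Qr' r : R) :
  r <> 0 -> 1 - 2*M r/r <> 0 ->
  is_derive M r Mr' -> is_derive P r Pr' -> is_derive Q r Qr' ->
  is_derive (fun s => (M s + 4*PI*P s*s^3)/(s^2*(1-2*M s/s)) + 4*PI*Q s*s/(1-2*M s/s)) r
   (((Mr' + 4*PI*((Pr'+Qr')*r^3 + 3*(P r+Q r)*r^2))*(r^2*(1-2*M r/r))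
     - (M r + 4*PI*(P r+Q r)*r^3)*(2*r*(1-2*M r/r) + r^2*(-2*Mr'/r + 2*M r/r^2)))
     /(r^2*(1-2*M r/r))^2).
Proof.
intros Hr Hu HM HP HQ.
auto_derive; try solve [derive_side].
rewrite_Derive M Mr'; rewrite_Derive P Pr'; rewrite_Derive Q Qr'.
change (1 + - (2 * M r * / r)) with (1 - 2 * M r / r).
assert (Hgap := sub_2mass_neq0 r (M r) Hr Hu).
field; repeat split; assumption.
Qed.

Lemma is_derive_dm_shape (G J : R -> R) (Gr' d r : R) :
  r <> 0 -> 1 + r*G r <> 0 -> is_derive G r Gr' ->
  is_derive J r (G r*(1 - r*G r)/(1 + r*G r)) ->
  is_derive (fun s => 4*PI*s^3*d/(3*(1+s*G s)^2)*exp(2*J s)) r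
    (4*PI*r^3*d/(3*(1+r*G r)^2)*exp(2*J r) *
      (3/r - 2*(G r + r*Gr')/(1+r*G r) + 2*(G r*(1-r*G r)/(1+r*G r)))).
Proof.
intros Hr H1 HG HJ.
auto_derive; try solve [derive_side].
rewrite_Derive G Gr'; rewrite_Derive J (G r*(1 - r*G r)/(1 + r*G r)).
field; split; assumption.
Qed.

(* The hypotheses say that P1 solves the TOV equation for the mass M, that
   Gd = G', and that D solves the linear equation defining dm; the conclusion
   is the TOV equation for the mass M + D. *)
Lemma perturbed_pressure_TOV (P1 D M : R -> R) (rho G Gd D' r : R) :
  r <> 0 -> 1 - 2*M r/r <> 0 -> 1 + r*G <> 0 -> 1 - 2*(M r + D r)/r <> 0 ->
  G = gTOV M P1 r ->
  is_derive P1 r (-(rho + P1 r)*G) ->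
  is_derive M r (4*PI*r^2*rho) ->
  is_derive D r D' ->
  Gd = ((4*PI*r^2*rho + 4*PI*((-(rho + P1 r)*G)*r^3 + 3*P1 r*r^2))*(r^2*(1-2*M r/r))
     - (M r + 4*PI*P1 r*r^3)*(2*r*(1-2*M r/r) + r^2*(-2*(4*PI*r^2*rho)/r + 2*M r/r^2)))
     /(r^2*(1-2*M r/r))^2 ->
  D' = D r*(3/r - 2*(G + r*Gd)/(1+r*G) + 2*(G*(1-r*G)/(1+r*G))) ->
  is_derive (fun s => P1 s - D s/(4*PI*s^3)*((1+8*PI*P1 s*s^2)/(1-2*M s/s))) r
   (-( (4*PI*r^2*rho + D')/(4*PI*r^2) + (P1 r - D r/(4*PI*r^3)*((1+8*PI*P1 r*r^2)/(1-2*M r/r))))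
    * (((M r + D r) + 4*PI*(P1 r - D r/(4*PI*r^3)*((1+8*PI*P1 r*r^2)/(1-2*M r/r)))*r^3)
       /(r^2*(1-2*(M r + D r)/r)))).
Proof.
intros Hr Hu H1 Hm HG HP HM HD HGd HD'; unfold gTOV in HG.
assert (HPI : PI <> 0) by (generalize PI_RGT_0; lra).
auto_derive; try solve [derive_side].
rewrite_Derive M (4*PI*r^2*rho); rewrite_Derive P1 (-(rho + P1 r)*G); rewrite_Derive D D'.
assert (Hgap := sub_2mass_neq0 r (M r) Hr Hu).
assert (Hgap' := sub_2mass_neq0 r (M r + D r) Hr Hm).
assert (Hnum : r - 2*M r + (M r + 4*PI*P1 r*r^3) <> 0).
{ intro H0; apply H1.
  replace (1 + r*G) with ((r - 2*M r + (M r + 4*PI*P1 r*r^3))/(r - 2*M r))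
    by (rewrite HG; field; split; assumption).
  rewrite H0; unfold Rdiv; ring. }
subst D' Gd G.
change (1 + - (2 * M r * / r)) with (1 - 2 * M r / r).
field; repeat split; assumption.
Qed.

Section Perturbation.
Variables (rho0 p0 : R -> R) (R0 Dp drhoc R1 : R).
Hypothesis background : TOV_regular rho0 p0 R0.
Hypothesis R1_range : 0 < R1 <= R0.
Hypothesis denominators_pos : forall r, 0 < r < R1 ->
  0 < 1 - 2 * m0 rho0 r / r /\
  0 < 1 + 4 * PI * Dp *
        RInt (fun s => s * exp (- 2 * I0 rho0 p0 s) / sqrt (1 - 2 * m0 rho0 s / s)) 0 r /\
  0 < 1 + r * g1 rho0 p0 Dp r /\
  0 < 1 - 2 * (m0 rho0 r + dm rho0 p0 Dp drhoc r) / r.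

Local Notation M0 := (m0 rho0).
Local Notation G0 := (g0 rho0 p0).
Local Notation Int0 := (I0 rho0 p0).
Local Notation Q1 := (dp1 rho0 p0 Dp).
Local Notation G1 := (g1 rho0 p0 Dp).
Local Notation DM := (dm rho0 p0 Dp drhoc).
Local Notation Kf := (fun s => s * exp (- 2 * Int0 s) / sqrt (1 - 2 * M0 s / s)).
Local Notation Jf := (fun s => G1 s * (1 - s * G1 s) / (1 + s * G1 s)).

Lemma R1_pos : 0 < R1.
Proof. lra. Qed.

Lemma rho0_at_centre : filterlim rho0 (at_right 0) (locally (rho0 0)).
Proof. apply background. Qed.

Lemma p0_at_centre : filterlim p0 (at_right 0) (locally (p0 0)).
Proof. apply background. Qed.

Lemma rho0_continuous (x : R) : 0 < x < R1 -> continuous rho0 x.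
Proof. intros Hx; apply background; lra. Qed.

Lemma p0_continuous (x : R) : 0 < x < R1 -> continuous p0 x.
Proof. intros Hx; apply background; lra. Qed.

Lemma p0_TOV (x : R) : 0 < x < R1 -> is_derive p0 x (- (rho0 x + p0 x) * G0 x).
Proof. intros Hx; apply background; lra. Qed.

Lemma compactness0_pos (x : R) : 0 < x < R1 -> 0 < 1 - 2 * M0 x / x.
Proof. intros Hx; apply denominators_pos, Hx. Qed.

Lemma M0_derive (x : R) : 0 < x < R1 -> is_derive M0 x (4 * PI * x ^ 2 * rho0 x).
Proof. exact (is_derive_mass rho0 _ R1 R1_pos rho0_at_centre rho0_continuous x). Qed.

Lemma M0_continuous (x : R) : 0 < x < R1 -> continuous M0 x.
Proof. intros Hx; exact (continuous_of_is_derive _ _ _ (M0_derive x Hx)). Qed.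

Lemma M0_div_sq_at_centre : filterlim (fun x => M0 x / x ^ 2) (at_right 0) (locally 0).
Proof. exact (mass_div_sq_at_centre rho0 _ R1 R1_pos rho0_at_centre rho0_continuous). Qed.

Lemma compactness0_at_centre : filterlim (fun x => 2 * M0 x / x) (at_right 0) (locally 0).
Proof.
apply filterlim_ext_loc with (fun x => 2 * x * (M0 x / x ^ 2)).
- apply (at_right_0_interval 1); [lra|]; intros x Hx; field; lra.
- pose proof M0_div_sq_at_centre; compute_lim.
Qed.

Lemma G0_at_centre : filterlim G0 (at_right 0) (locally 0).
Proof.
apply filterlim_ext_loc with (fun x => (M0 x / x ^ 2 + 4 * PI * p0 x * x) / (1 - 2 * M0 x / x)).
- apply (at_right_0_interval R1 _ R1_pos); intros x Hx.
  assert (Hgap := sub_2mass_pos x (M0 x) (proj1 Hx) (compactness0_pos x Hx)).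
  unfold g0, gTOV; field; repeat split; lra.
- pose proof M0_div_sq_at_centre; pose proof compactness0_at_centre; pose proof p0_at_centre.
  compute_lim.
Qed.

Lemma G0_continuous (x : R) : 0 < x < R1 -> continuous G0 x.
Proof.
intros Hx; pose proof (M0_continuous x Hx); pose proof (p0_continuous x Hx).
pose proof (compactness0_pos x Hx).
unfold continuous, g0, gTOV in *; compute_lim.
apply Rmult_integral_contrapositive_currified; [apply pow_nonzero|]; lra.
Qed.

Lemma Int0_derive (x : R) : 0 < x < R1 -> is_derive Int0 x (G0 x).
Proof. exact (is_derive_RInt_from_0 _ _ _ R1_pos G0_at_centre G0_continuous x). Qed.

Lemma Int0_at_centre : filterlim Int0 (at_right 0) (locally 0).
Proof. exact (RInt_from_0_at_centre _ _ _ R1_pos G0_at_centre G0_continuous). Qed.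

Lemma Kf_at_centre : filterlim Kf (at_right 0) (locally 0).
Proof. pose proof Int0_at_centre; pose proof compactness0_at_centre; compute_lim. Qed.

Lemma Kf_continuous (x : R) : 0 < x < R1 -> continuous Kf x.
Proof.
intros Hx; pose proof (M0_continuous x Hx).
pose proof (continuous_of_is_derive _ _ _ (Int0_derive x Hx)).
assert (Hs := sqrt_lt_R0 _ (compactness0_pos x Hx)).
unfold continuous in *; compute_lim.
Qed.

Lemma dp1_derive (x : R) : 0 < x < R1 ->
  is_derive Q1 x (Q1 x * ((- 2 * (4 * PI * x ^ 2 * rho0 x) / x + 2 * M0 x / x ^ 2)
                           / (2 * (1 - 2 * M0 x / x))
                          - 2 * G0 x - 4 * PI * Q1 x * x / (1 - 2 * M0 x / x))).
Proof.
intros Hx; destruct (denominators_pos x Hx) as [Hu [HK _]].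
apply (is_derive_dp1_shape M0 Int0 (fun y => RInt Kf 0 y)); try lra.
- apply M0_derive, Hx.
- apply Int0_derive, Hx.
- exact (is_derive_RInt_from_0 _ _ _ R1_pos Kf_at_centre Kf_continuous x Hx).
Qed.

Lemma dp1_at_centre : filterlim Q1 (at_right 0) (locally Dp).
Proof.
pose proof Int0_at_centre; pose proof compactness0_at_centre.
pose proof (RInt_from_0_at_centre _ _ _ R1_pos Kf_at_centre Kf_continuous).
unfold dp1; compute_lim.
Qed.

(* Since g1 = gTOV m0 (p0 + dp1), this is the TOV equation for the unperturbed mass. *)
Lemma p1_TOV (x : R) : 0 < x < R1 ->
  is_derive (fun s => p0 s + Q1 s) x (- (rho0 x + (p0 x + Q1 x)) * G1 x).
Proof.
intros Hx; assert (Hgap := sub_2mass_pos x (M0 x) (proj1 Hx) (compactness0_pos x Hx)).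
eapply is_derive_eq_value.
- apply (@is_derive_plus R_AbsRing R_NormedModule); [apply p0_TOV | apply dp1_derive]; exact Hx.
- unfold g1, g0, gTOV; simpl; unfold plus; simpl; field; repeat split; lra.
Qed.

Definition g1_deriv (x : R) : R :=
  ((4 * PI * x ^ 2 * rho0 x
    + 4 * PI * ((- (rho0 x + (p0 x + Q1 x)) * G1 x) * x ^ 3 + 3 * (p0 x + Q1 x) * x ^ 2))
     * (x ^ 2 * (1 - 2 * M0 x / x))
   - (M0 x + 4 * PI * (p0 x + Q1 x) * x ^ 3)
     * (2 * x * (1 - 2 * M0 x / x)
        + x ^ 2 * (- 2 * (4 * PI * x ^ 2 * rho0 x) / x + 2 * M0 x / x ^ 2)))
  / (x ^ 2 * (1 - 2 * M0 x / x)) ^ 2.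

Lemma g1_derive (x : R) : 0 < x < R1 -> is_derive G1 x (g1_deriv x).
Proof.
intros Hx; pose proof (compactness0_pos x Hx).
assert (Hgap := sub_2mass_pos x (M0 x) (proj1 Hx) (compactness0_pos x Hx)).
eapply is_derive_eq_value.
- apply (is_derive_g1_shape M0 p0 Q1); try lra;
    [apply M0_derive | apply p0_TOV | apply dp1_derive]; exact Hx.
- unfold g1_deriv, g1, g0, gTOV; field; repeat split; lra.
Qed.

Lemma g1_continuous (x : R) : 0 < x < R1 -> continuous G1 x.
Proof. intros Hx; exact (continuous_of_is_derive _ _ _ (g1_derive x Hx)). Qed.

Lemma g1_at_centre : filterlim G1 (at_right 0) (locally 0).
Proof.
pose proof G0_at_centre; pose proof dp1_at_centre; pose proof compactness0_at_centre.
unfold g1; compute_lim.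
Qed.

Lemma g1_deriv_continuous (x : R) : 0 < x < R1 -> continuous g1_deriv x.
Proof.
intros Hx; pose proof (M0_continuous x Hx); pose proof (p0_continuous x Hx).
pose proof (rho0_continuous x Hx); pose proof (g1_continuous x Hx).
pose proof (continuous_of_is_derive _ _ _ (dp1_derive x Hx)).
pose proof (compactness0_pos x Hx).
unfold continuous, g1_deriv in *; compute_lim;
  repeat apply Rmult_integral_contrapositive_currified; try apply pow_nonzero; lra.
Qed.

Lemma sq_g1_deriv_at_centre :
  filterlim (fun x => x ^ 2 * g1_deriv x) (at_right 0) (locally 0).
Proof.
apply filterlim_ext_loc with (fun x =>
  x ^ 2 * (4 * PI * rho0 x + 4 * PI * (- (rho0 x + (p0 x + Q1 x)) * G1 x * x
                                       + 3 * (p0 x + Q1 x))) / (1 - 2 * M0 x / x)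
  - (M0 x / x ^ 2 + 4 * PI * (p0 x + Q1 x) * x)
    * (2 * x * (1 - 2 * M0 x / x) + x ^ 2 * (- 8 * PI * x * rho0 x + 2 * (M0 x / x ^ 2)))
    / (1 - 2 * M0 x / x) ^ 2).
- apply (at_right_0_interval R1 _ R1_pos); intros x Hx.
  assert (Hgap := sub_2mass_pos x (M0 x) (proj1 Hx) (compactness0_pos x Hx)).
  unfold g1_deriv; field; repeat split; lra.
- pose proof rho0_at_centre; pose proof p0_at_centre; pose proof dp1_at_centre.
  pose proof g1_at_centre; pose proof M0_div_sq_at_centre; pose proof compactness0_at_centre.
  compute_lim.
Qed.

Lemma Jf_at_centre : filterlim Jf (at_right 0) (locally 0).
Proof. pose proof g1_at_centre; compute_lim. Qed.

Lemma Jf_continuous (x : R) : 0 < x < R1 -> continuous Jf x.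
Proof.
intros Hx; pose proof (g1_continuous x Hx).
destruct (denominators_pos x Hx) as [_ [_ [Hg1 _]]].
unfold continuous in *; compute_lim.
Qed.

Lemma J_at_centre : filterlim (fun x => RInt Jf 0 x) (at_right 0) (locally 0).
Proof. exact (RInt_from_0_at_centre _ _ _ R1_pos Jf_at_centre Jf_continuous). Qed.

Definition dm_deriv (x : R) : R :=
  DM x * (3 / x - 2 * (G1 x + x * g1_deriv x) / (1 + x * G1 x) + 2 * Jf x).

Lemma dm_derive (x : R) : 0 < x < R1 -> is_derive DM x (dm_deriv x).
Proof.
intros Hx; destruct (denominators_pos x Hx) as [_ [_ [Hg1 _]]].
apply (is_derive_dm_shape G1 (fun y => RInt Jf 0 y)); try lra.
- apply g1_derive, Hx.
- exact (is_derive_RInt_from_0 _ _ _ R1_pos Jf_at_centre Jf_continuous x Hx).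
Qed.

Lemma dm_continuous (x : R) : 0 < x < R1 -> continuous DM x.
Proof. intros Hx; exact (continuous_of_is_derive _ _ _ (dm_derive x Hx)). Qed.

(* On r <= 0 the central values are used, so that rho 0 and p 0 are their right limits. *)
Definition rho_pert (r : R) : R :=
  if Rle_dec r 0 then rho0 0 + drhoc
  else Derive (fun s => M0 s + DM s) r / (4 * PI * r ^ 2).

Definition p_pert (r : R) : R :=
  if Rle_dec r 0 then p0 0 + (Dp - drhoc / 3) else p0 r + dp rho0 p0 Dp drhoc r.

Lemma rho_pert_centre : rho_pert 0 = rho0 0 + drhoc.
Proof. unfold rho_pert; destruct (Rle_dec 0 0); [reflexivity | lra]. Qed.

Lemma p_pert_centre : p_pert 0 = p0 0 + (Dp - drhoc / 3).
Proof. unfold p_pert; destruct (Rle_dec 0 0); [reflexivity | lra]. Qed.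

Lemma rho_pert_pos (r : R) :
  0 < r -> rho_pert r = Derive (fun s => M0 s + DM s) r / (4 * PI * r ^ 2).
Proof. intros Hr; unfold rho_pert; destruct (Rle_dec r 0); [lra | reflexivity]. Qed.

Lemma p_pert_pos (r : R) : 0 < r -> p_pert r = p0 r + dp rho0 p0 Dp drhoc r.
Proof. intros Hr; unfold p_pert; destruct (Rle_dec r 0); [lra | reflexivity]. Qed.

Lemma rho_pert_eq (x : R) : 0 < x < R1 ->
  rho_pert x = (4 * PI * x ^ 2 * rho0 x + dm_deriv x) / (4 * PI * x ^ 2).
Proof.
intros Hx; rewrite rho_pert_pos by lra; f_equal; apply is_derive_unique.
apply (@is_derive_plus R_AbsRing R_NormedModule); [apply M0_derive | apply dm_derive]; exact Hx.
Qed.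

(* Near the centre dm' / (4 pi r^2) -> drhoc, since r g1 -> 0, r^2 g1' -> 0 and r Jf -> 0. *)
Lemma rho_pert_at_centre : filterlim rho_pert (at_right 0) (locally (rho0 0 + drhoc)).
Proof.
apply filterlim_ext_loc with (fun x =>
  rho0 x + drhoc / (3 * (1 + x * G1 x) ^ 2) * exp (2 * RInt Jf 0 x)
           * (3 - 2 * (x * G1 x + x ^ 2 * g1_deriv x) / (1 + x * G1 x) + 2 * (x * Jf x))).
- apply (at_right_0_interval R1 _ R1_pos); intros x Hx.
  destruct (denominators_pos x Hx) as [_ [_ [Hg1 _]]]; pose proof PI_RGT_0.
  rewrite rho_pert_eq by exact Hx; unfold dm_deriv, dm; field; repeat split; lra.
- pose proof rho0_at_centre; pose proof g1_at_centre; pose proof sq_g1_deriv_at_centre.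
  pose proof Jf_at_centre; pose proof J_at_centre.
  compute_lim.
Qed.

Lemma rho_pert_continuous (x : R) : 0 < x < R1 -> continuous rho_pert x.
Proof.
intros Hx.
apply continuous_ext_loc with (fun s => (4 * PI * s ^ 2 * rho0 s + dm_deriv s) / (4 * PI * s ^ 2)).
- apply (locally_interval _ x 0 R1); simpl; try lra; intros y Hy1 Hy2.
  symmetry; apply rho_pert_eq; lra.
- pose proof (rho0_continuous x Hx); pose proof (g1_continuous x Hx).
  pose proof (g1_deriv_continuous x Hx); pose proof (dm_continuous x Hx).
  pose proof (Jf_continuous x Hx); destruct (denominators_pos x Hx) as [_ [_ [Hg1 _]]].
  assert (0 < 4 * PI * x ^ 2) by (pose proof PI_RGT_0; pose proof (pow_lt x 2 (proj1 Hx)); nra).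
  unfold continuous, dm_deriv in *; compute_lim.
Qed.

Lemma p_pert_eq (x : R) : 0 < x < R1 ->
  p_pert x = (p0 x + Q1 x) - DM x / (4 * PI * x ^ 3)
             * ((1 + 8 * PI * (p0 x + Q1 x) * x ^ 2) / (1 - 2 * M0 x / x)).
Proof. intros Hx; rewrite p_pert_pos by lra; unfold dp; ring. Qed.

Lemma p_pert_at_centre : filterlim p_pert (at_right 0) (locally (p0 0 + (Dp - drhoc / 3))).
Proof.
apply filterlim_ext_loc with (fun x =>
  p0 x + Q1 x - drhoc / (3 * (1 + x * G1 x) ^ 2) * exp (2 * RInt Jf 0 x)
                * ((1 + 8 * PI * (p0 x + Q1 x) * x ^ 2) / (1 - 2 * M0 x / x))).
- apply (at_right_0_interval R1 _ R1_pos); intros x Hx.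
  destruct (denominators_pos x Hx) as [Hu [_ [Hg1 _]]].
  assert (Hgap := sub_2mass_pos x (M0 x) (proj1 Hx) Hu); pose proof PI_RGT_0.
  rewrite p_pert_eq by exact Hx; unfold dm; field; repeat split; lra.
- pose proof p0_at_centre; pose proof dp1_at_centre; pose proof g1_at_centre.
  pose proof compactness0_at_centre; pose proof J_at_centre.
  compute_lim.
Qed.

Lemma mass_rho_pert (x : R) : 0 < x < R1 -> mass rho_pert x = M0 x + DM x.
Proof.
revert x; apply (mass_unique rho_pert _ R1 R1_pos rho_pert_at_centre rho_pert_continuous
                  (fun s => M0 s + DM s)).
- intros y Hy; eapply is_derive_eq_value.
  + apply (@is_derive_plus R_AbsRing R_NormedModule); [apply M0_derive | apply dm_derive]; exact Hy.
  + rewrite rho_pert_eq by exact Hy; pose proof PI_RGT_0.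
    simpl; unfold plus; simpl; field; repeat split; try apply pow_nonzero; lra.
- pose proof (mass_at_centre rho0 _ R1 R1_pos rho0_at_centre rho0_continuous).
  pose proof g1_at_centre; pose proof J_at_centre.
  unfold m0, dm; compute_lim.
Qed.

Lemma p_pert_TOV (x : R) : 0 < x < R1 ->
  is_derive p_pert x (- (rho_pert x + p_pert x) * gTOV (mass rho_pert) p_pert x).
Proof.
intros Hx; destruct (denominators_pos x Hx) as [Hu [_ [Hg1 Hm]]].
apply is_derive_ext_loc with (fun s =>
  (p0 s + Q1 s) - DM s / (4 * PI * s ^ 3)
                  * ((1 + 8 * PI * (p0 s + Q1 s) * s ^ 2) / (1 - 2 * M0 s / s))).
- apply (locally_interval _ x 0 R1); simpl; try lra; intros y Hy1 Hy2.
  symmetry; apply p_pert_eq; lra.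
- eapply is_derive_eq_value.
  + apply (perturbed_pressure_TOV (fun s => p0 s + Q1 s) DM M0 (rho0 x) (G1 x) (g1_deriv x)
             (dm_deriv x) x); try lra.
    * assert (Hgap := sub_2mass_pos x (M0 x) (proj1 Hx) Hu).
      unfold g1, g0, gTOV; field; repeat split; lra.
    * apply p1_TOV, Hx.
    * apply M0_derive, Hx.
    * apply dm_derive, Hx.
    * reflexivity.
    * reflexivity.
  + unfold gTOV; rewrite mass_rho_pert, rho_pert_eq, (p_pert_eq x); trivial.
Qed.

Lemma perturbation_TOV_regular : TOV_regular rho_pert p_pert R1.
Proof.
split; [exact R1_pos|].
split; [rewrite rho_pert_centre; exact rho_pert_at_centre|].
split; [rewrite p_pert_centre; exact p_pert_at_centre|].
split; [|split].
- intros r Hr; split; [apply rho_pert_continuous, Hr|].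
  exact (continuous_of_is_derive _ _ _ (p_pert_TOV r Hr)).
- intros r Hr; rewrite mass_rho_pert by exact Hr; apply denominators_pos, Hr.
- exact p_pert_TOV.
Qed.

End Perturbation.

Theorem theoremP3 (rho0 p0 : R -> R) (R0 : R) (Dp drhoc R1 : R) :
  TOV_regular rho0 p0 R0 ->
  0 < R1 <= R0 ->
  (forall r, 0 < r < R1 ->
     0 < 1 - 2 * m0 rho0 r / r /\
     0 < 1 + 4 * PI * Dp *
           RInt (fun s => s * exp (- 2 * I0 rho0 p0 s)
                          / sqrt (1 - 2 * m0 rho0 s / s)) 0 r /\
     0 < 1 + r * g1 rho0 p0 Dp r /\
     0 < 1 - 2 * (m0 rho0 r + dm rho0 p0 Dp drhoc r) / r) ->
  exists rho p : R -> R,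
    TOV_regular rho p R1 /\
    rho 0 = rho0 0 + drhoc /\
    p 0 = p0 0 + (Dp - drhoc / 3) /\
    (forall r, 0 < r < R1 ->
       mass rho r = m0 rho0 r + dm rho0 p0 Dp drhoc r /\
       rho r = Derive (fun s => m0 rho0 s + dm rho0 p0 Dp drhoc s) r
               / (4 * PI * r ^ 2) /\
       p r = p0 r + dp rho0 p0 Dp drhoc r).
Proof.
intros background R1_range denominators_pos.
exists (rho_pert rho0 p0 Dp drhoc), (p_pert rho0 p0 Dp drhoc).
split; [|split; [|split]].
- eapply perturbation_TOV_regular; eassumption.
- apply rho_pert_centre.
- apply p_pert_centre.
- intros r Hr; split; [|split].
  + eapply mass_rho_pert; eassumption.
  + apply rho_pert_pos, Hr.
  + apply p_pert_pos, Hr.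
Qed.
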